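(* Consider the four-oscillator system below with $\alpha_\mathrm{s}=\frac{\pi}{2}$, $\alpha_\mathrm{n}=0$ and arbitrary $A\in\mathbb{R}$, $\omega\in\mathbb{R}$. Then the function $$H^{(-1,0)}(\psi_1,\psi_3)=\cot\!\left(\frac{\psi_1+\psi_3}{4}\right)\tan\!\left(\frac{\psi_1-\psi_3}{4}\right)$$ (with $\psi_1,\psi_3$ the real-valued phase differences of a solution) is constant along every solution on any time interval on which it is defined (i.e. on which $(\psi_1+\psi_3)/4\notin\pi\mathbb{Z}$ and $(\psi_1-\psi_3)/4\notin \pi/2+\pi\mathbb{Z}$).
   Context: Network of $M=2$ populations of $N=2$ phase oscillators with phases $\theta_{\sigma,k}(t)\in\mathbb{R}$ (population $\sigma\in\{1,2\}$, oscillator $k\in\{1,2\}$), evolving by $$\dot\theta_{\sigma,k}=\omega+\frac{K_\mathrm{s}}{4}\sum_{j=1}^{2}\sin(\theta_{\sigma,j}-\theta_{\sigma,k}-\alpha_\mathrm{s})+\frac{K_\mathrm{n}}{4}\sum_{j=1}^{2}\sin(\theta_{\tau,j}-\theta_{\sigma,k}-\alpha_\mathrm{n}),$$ where $\tau$ denotes the population other than $\sigma$, $\omega\in\mathbb{R}$, $\alpha_\mathrm{s},\alpha_\mathrm{n}\in\mathbb{R}$ are phase lags, and the coupling strengths are parametrized by $A\in\mathbb{R}$ via $K_\mathrm{s}=(1+A)/2$, $K_\mathrm{n}=(1-A)/2$ (so $K_\mathrm{s}+K_\mathrm{n}=1$, $A=K_\mathrm{s}-K_\mathrm{n}$). The phase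 differences are $\psi_1=\theta_{1,1}-\theta_{1,2}$, $\psi_2=\theta_{1,2}-\theta_{2,1}$, $\psi_3=\theta_{2,1}-\theta_{2,2}$; they satisfy an autonomous ODE (the reduced system) since the right-hand side depends only on phase differences. *)

From Stdlib Require Import Reals.
Open Scope R_scope.

Definition other (s : nat) : nat := if Nat.eqb s 1 then 2%nat else 1%nat.

(* Right-hand side of the M=2, N=2 network for oscillator (s,k), given the
   instantaneous phases th s j (s, j in {1,2}). *)
Definition rhs (omega Ks Kn als aln : R) (th : nat -> nat -> R) (s k : nat) : R :=
  omega
  + Ks / 4 * (sin (th s 1%nat - th s k - als) + sin (th s 2%nat - th s k - als))
  + Kn / 4 * (sin (th (other s) 1%nat - th s k - aln)
              + sin (th (other s) 2%nat - th s k - aln)).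

Definition is_solution_on (omega A als aln a b : R)
    (theta : nat -> nat -> R -> R) : Prop :=
  forall t, a < t < b ->
  forall s k, (s = 1 \/ s = 2)%nat -> (k = 1 \/ k = 2)%nat ->
    derivable_pt_lim (theta s k) t
      (rhs omega ((1 + A) / 2) ((1 - A) / 2) als aln
           (fun s' k' => theta s' k' t) s k).

Definition cot (x : R) : R := cos x / sin x.

Definition psi1 (theta : nat -> nat -> R -> R) (t : R) : R :=
  theta 1%nat 1%nat t - theta 1%nat 2%nat t.
Definition psi3 (theta : nat -> nat -> R -> R) (t : R) : R :=
  theta 2%nat 1%nat t - theta 2%nat 2%nat t.

Definition H_m10 (p1 p3 : R) : R := cot ((p1 + p3) / 4) * tan ((p1 - p3) / 4).

Definition H_defined (p1 p3 : R) : Prop :=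
  (forall z : Z, (p1 + p3) / 4 <> IZR z * PI) /\
  (forall z : Z, (p1 - p3) / 4 <> PI / 2 + IZR z * PI).

(* Put P = (psi1 + psi3)/4 and Q = (psi1 - psi3)/4.  With alpha_s = pi/2 the
   intra-population coupling cancels in the equations of psi1 and psi3, and the
   remaining inter-population terms satisfy
     P' sin (2Q) = Q' sin (2P).
   Since (cot P tan Q)' = (Q' sin (2P) - P' sin (2Q)) / (2 sin^2 P cos^2 Q),
   H = cot P tan Q has zero derivative wherever it is defined, hence is constant
   on the interval by the mean value theorem. *)

From Stdlib Require Import Reals Lra.
From Coquelicot Require Import Coquelicot.
Open Scope R_scope.

(* The velocity of theta_{s,1} - theta_{s,2}, i.e. of psi1 for s = 1 and of psi3
   (not psi2) for s = 2. *)
Definition psi_rate (omega Ks Kn : R) (th : nat -> nat -> R) (s : nat) : R :=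
  rhs omega Ks Kn (PI / 2) 0 th s 1%nat - rhs omega Ks Kn (PI / 2) 0 th s 2%nat.

Lemma sin_minus_PI2 (x : R) : sin (x - PI / 2) = - cos x.
Proof. rewrite sin_minus, cos_PI2, sin_PI2; ring. Qed.

Lemma psi_rate_relation (omega Ks Kn : R) (th : nat -> nat -> R) :
  let p1 := th 1%nat 1%nat - th 1%nat 2%nat in
  let p3 := th 2%nat 1%nat - th 2%nat 2%nat in
  (psi_rate omega Ks Kn th 1 + psi_rate omega Ks Kn th 2) * sin ((p1 - p3) / 2)
  = (psi_rate omega Ks Kn th 1 - psi_rate omega Ks Kn th 2) * sin ((p1 + p3) / 2).
Proof.
  intros p1 p3; unfold p1, p3, psi_rate, rhs, other; simpl.
  rewrite !sin_minus_PI2, !Rminus_diag, !cos_0, !Rminus_0_r.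
  (* Write the phases as centre +- half difference, then expand. *)
  set (u := th 1%nat 1%nat); set (v := th 1%nat 2%nat);
  set (x := th 2%nat 1%nat); set (y := th 2%nat 2%nat).
  set (m := (u + v) / 2); set (a := (u - v) / 2);
  set (n := (x + y) / 2); set (b := (x - y) / 2).
  replace u with (m + a) by (unfold m, a; field).
  replace v with (m - a) by (unfold m, a; field).
  replace x with (n + b) by (unfold n, b; field).
  replace y with (n - b) by (unfold n, b; field).
  replace ((m + a - (m - a) - (n + b - (n - b))) / 2) with (a - b) by field.
  replace ((m + a - (m - a) + (n + b - (n - b))) / 2) with (a + b) by field.
  repeat rewrite ?sin_plus, ?sin_minus, ?cos_plus, ?cos_minus.
  ring.
Qed.

Lemma is_derive_cot_mul_tan (P Q : R -> R) (t dP dQ : R) :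
  is_derive P t dP -> is_derive Q t dQ ->
  sin (P t) <> 0 -> cos (Q t) <> 0 ->
  is_derive (fun s => cot (P s) * tan (Q s)) t
    ((dQ * sin (2 * P t) - dP * sin (2 * Q t)) / (2 * sin (P t) ^ 2 * cos (Q t) ^ 2)).
Proof.
  intros HP HQ hsP hcQ.
  pose proof (is_derive_div _ _ t _ _
                (is_derive_comp cos P t _ _ (is_derive_cos _) HP)
                (is_derive_comp sin P t _ _ (is_derive_sin _) HP) hsP) as DcotP.
  pose proof (is_derive_div _ _ t _ _
                (is_derive_comp sin Q t _ _ (is_derive_sin _) HQ)
                (is_derive_comp cos Q t _ _ (is_derive_cos _) HQ) hcQ) as DtanQ.
  refine (eq_ind _ (is_derive _ t) (is_derive_mult _ _ t _ _ DcotP DtanQ Rmult_comm) _ _).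
  pose proof (sin2_cos2 (P t)) as hP; pose proof (sin2_cos2 (Q t)) as hQ.
  unfold Rsqr in hP, hQ; rewrite !sin_2a; unfold scal, plus; simpl; unfold mult; simpl.
  transitivity
    ((dQ * sin (P t) * cos (P t) * (sin (Q t) * sin (Q t) + cos (Q t) * cos (Q t))
      - dP * sin (Q t) * cos (Q t) * (sin (P t) * sin (P t) + cos (P t) * cos (P t)))
     / (sin (P t) ^ 2 * cos (Q t) ^ 2)); [| rewrite hP, hQ]; field; auto.
Qed.

Lemma is_derive_cot_mul_tan_0 (P Q : R -> R) (t dP dQ : R) :
  is_derive P t dP -> is_derive Q t dQ ->
  sin (P t) <> 0 -> cos (Q t) <> 0 ->
  dP * sin (2 * Q t) = dQ * sin (2 * P t) ->
  is_derive (fun s => cot (P s) * tan (Q s)) t 0.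
Proof.
  intros HP HQ hsP hcQ rel.
  replace 0 with ((dQ * sin (2 * P t) - dP * sin (2 * Q t))
                  / (2 * sin (P t) ^ 2 * cos (Q t) ^ 2)).
  - exact (is_derive_cot_mul_tan P Q t dP dQ HP HQ hsP hcQ).
  - rewrite rel, Rminus_diag; field; auto.
Qed.

Lemma H_defined_sin_cos_neq_0 (p1 p3 : R) :
  H_defined p1 p3 -> sin ((p1 + p3) / 4) <> 0 /\ cos ((p1 - p3) / 4) <> 0.
Proof.
  intros [hP hQ]; split.
  - intro e; destruct (sin_eq_0_0 _ e) as [z hz]; exact (hP z hz).
  - intro e; destruct (cos_eq_0_0 _ e) as [z hz]; apply (hQ z); lra.
Qed.

Lemma eq_of_derivable_pt_lim_0 (f : R -> R) (a b t1 t2 : R) :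
  (forall t, a < t < b -> derivable_pt_lim f t 0) ->
  a < t1 < b -> a < t2 < b -> f t1 = f t2.
Proof.
  intros Df h1 h2.
  assert (ordered : forall u v, a < u < b -> a < v < b -> u < v -> f u = f v).
  { intros u v hu hv huv.
    destruct (MVT_cor2 f (fun _ => 0) u v huv) as [c [hc _]].
    - intros c hc; apply Df; lra.
    - lra. }
  destruct (Rtotal_order t1 t2) as [lt | [-> | gt]]; auto.
  symmetry; auto.
Qed.

Section Solution.

Variables (A omega a b : R) (theta : nat -> nat -> R -> R).
Hypothesis sol : is_solution_on omega A (PI / 2) 0 a b theta.

Let rate (t : R) (s : nat) : R :=
  psi_rate omega ((1 + A) / 2) ((1 - A) / 2) (fun s' k' => theta s' k' t) s.

Lemma is_derive_phase_diff (s : nat) (t : R) : (s = 1 \/ s = 2)%nat -> a < t < b ->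
  is_derive (fun u => theta s 1%nat u - theta s 2%nat u) t (rate t s).
Proof.
  intros hs ht; apply (is_derive_minus (theta s 1%nat) (theta s 2%nat));
    apply is_derive_Reals, sol; auto.
Qed.

Lemma is_derive_H_m10_0 (t : R) :
  a < t < b -> H_defined (psi1 theta t) (psi3 theta t) ->
  is_derive (fun s => H_m10 (psi1 theta s) (psi3 theta s)) t 0.
Proof.
  intros ht hdef.
  destruct (H_defined_sin_cos_neq_0 _ _ hdef) as [hsP hcQ].
  pose proof (is_derive_phase_diff 1 t (or_introl eq_refl) ht) as D1.
  pose proof (is_derive_phase_diff 2 t (or_intror eq_refl) ht) as D3.
  assert (DP : is_derive (fun s => (psi1 theta s + psi3 theta s) / 4) t
                 ((rate t 1 + rate t 2) / 4)).
  { exact (is_derive_scal_l _ t _ (/ 4) (is_derive_plus _ _ t _ _ D1 D3)). }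
  assert (DQ : is_derive (fun s => (psi1 theta s - psi3 theta s) / 4) t
                 ((rate t 1 - rate t 2) / 4)).
  { exact (is_derive_scal_l _ t _ (/ 4) (is_derive_minus _ _ t _ _ D1 D3)). }
  apply (is_derive_cot_mul_tan_0 _ _ t _ _ DP DQ hsP hcQ).
  pose proof (psi_rate_relation omega ((1 + A) / 2) ((1 - A) / 2)
                (fun s' k' => theta s' k' t)) as rel; simpl in rel.
  unfold rate, psi1, psi3.
  assert (half : forall x, 2 * (x / 4) = x / 2) by (intro; field).
  rewrite !half; lra.
Qed.

End Solution.

Theorem mainTheorem6 :
  forall (A omega a b : R) (theta : nat -> nat -> R -> R),
    is_solution_on omega A (PI / 2) 0 a b theta ->
    (forall t, a < t < b -> H_defined (psi1 theta t) (psi3 theta t)) ->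
    forall t1 t2, a < t1 < b -> a < t2 < b ->
      H_m10 (psi1 theta t1) (psi3 theta t1) = H_m10 (psi1 theta t2) (psi3 theta t2).
Proof.
  intros A omega a b theta sol hdef t1 t2 h1 h2.
  apply (eq_of_derivable_pt_lim_0 (fun t => H_m10 (psi1 theta t) (psi3 theta t)) a b);
    auto.
  intros t ht; apply is_derive_Reals, (is_derive_H_m10_0 A omega a b); auto.
Qed.
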